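(* Let $A$ be a band operator on $\ell^2(\mathbb{Z})$ satisfying $\mathcal{C}(A)=\mathcal{C}(A|_{\mathbb{N}})$. Then (a) $A$ is self-contained; (b) $\mathcal{C}(A^* )=\mathcal{C}(A^*|_{\mathbb{N}})$; (c) $\mathcal{C}(A)=\mathcal{C}(A|_{k..})$ for all $k\in\mathbb{Z}$. Moreover, (d) a band operator $B$ on $\ell^2(\mathbb{Z})$ is self-contained if and only if $\mathcal{C}(B)=\mathcal{C}(B|_{\mathbb{N}})\cup\mathcal{C}(B|_{-\mathbb{N}})$.
   Context: $\mathbb{N}=\{1,2,\dots\}$, $k..:=\{n\in\mathbb{Z}:n\ge k\}$, $a..b:=\{n\in\mathbb{Z}:a\le n\le b\}$. A band operator with band-width $w$ on $\ell^2(\mathbb{Z})$ is a bounded operator whose matrix satisfies $A_{ij}=0$ for $|i-j|>w$. For $\mathbb{J}\subseteq\mathbb{Z}$, $A|_{\mathbb{J}}:\ell^2(\mathbb{J})\to\ell^2(\mathbb{Z})$ is the restriction, with matrix $(A_{ij})_{i\in\mathbb{Z},j\in\mathbb{J}}$. For $N\in\mathbb{N}$, an $N$-column submatrix of an operator $B$ (with column index set $\mathbb{J}$) is a matrix $C=(C_{ij})_{i\in1-w..N+w,\,j\in1..N}$ with $C_{ij}=B_{k+i,k+j}$ for some $k$ with $k+1..k+N\subseteq\mathbb{J}$; $\mathcal{C}(B)$ is the set of all such matrices over all $N$. $A$ is self-contained if every $C\in\mathcal{C}(A)$ appears infinitely often in $A$, i.e. for infinitely many $k\in\mathbb{Z}$.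 *)

From HB Require Import structures.
From mathcomp Require Import all_boot all_order all_algebra.
From mathcomp Require Import complex.
From mathcomp Require Import boolp classical_sets cardinality reals.
Unset Printing Implicit Defensive.
Import Order.TTheory GRing.Theory Num.Theory.
Local Open Scope ring_scope.

(* A bi-infinite matrix on l^2(Z) with complex entries: (i,j) |-> A_{ij}. *)
Definition zmat (R : realType) := int -> int -> R[i].

(* For a band matrix, boundedness of the
   operator on l^2(Z) is equivalent to uniform boundedness of the entries. *)
Definition band_operator {R : realType} (w : nat) (A : zmat R) : Prop :=
  (forall i j : int, (w%:Z < `|i - j|)%R -> A i j = 0) /\
  exists c : R, forall i j : int, `|A i j| <= (c%:C)%C.

Definition adjoint {R : realType} (A : zmat R) : zmat R :=
  fun i j => conjc (A j i).

(* The N-column submatrix of B at offset k, with rows indexed by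
   1-w .. N+w (stored as r = 0 .. N+2w-1, i = r + 1 - w) and columns
   1 .. N (stored as c = 0 .. N-1, j = c + 1):
   C_{ij} = B_{k+i, k+j}. *)
Definition subm {R : realType} (w : nat) (B : zmat R) (N : nat) (k : int)
  : 'M[R[i]]_(N + w + w, N) :=
  \matrix_(r < N + w + w, c < N)
     B (k + (r%:Z + 1 - w%:Z)) (k + (c%:Z + 1)).

Definition inC {R : realType} (w : nat) (B : zmat R) (J : set int)
  (N : nat) (M : 'M[R[i]]_(N + w + w, N)) : Prop :=
  (0 < N)%N /\
  exists k : int, (forall j : nat, (1 <= j <= N)%N -> J (k + j%:Z)) /\
                  M = subm w B N k.

Definition Zall : set int := setT.
Definition natpos : set int := [set n : int | (1 <= n)%R].
Definition natneg : set int := [set n : int | (n <= -1)%R].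
Definition from (k : int) : set int := [set n : int | (k <= n)%R].

Definition Ceq {R : realType} (w : nat) (B : zmat R) (J1 J2 : set int) : Prop :=
  forall (N : nat) (M : 'M[R[i]]_(N + w + w, N)),
    inC w B J1 N M <-> inC w B J2 N M.

Definition Ceq_union {R : realType} (w : nat) (B : zmat R) : Prop :=
  forall (N : nat) (M : 'M[R[i]]_(N + w + w, N)),
    inC w B Zall N M <-> (inC w B natpos N M \/ inC w B natneg N M).

Definition self_contained {R : realType} (w : nat) (A : zmat R) : Prop :=
  forall (N : nat) (M : 'M[R[i]]_(N + w + w, N)),
    inC w A Zall N M -> infinite_set [set k : int | M = subm w A N k].

From HB Require Import structures.
From mathcomp Require Import all_boot all_order all_algebra.
From mathcomp Require Import complex.
From mathcomp Require Import boolp classical_sets cardinality reals.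
From mathcomp Require Import zify.
Import Order.TTheory GRing.Theory Num.Theory.
Local Open Scope ring_scope.
Local Open Scope classical_set_scope.

(* The N-column submatrix at k is the middle of the
   (N + 2L)-column submatrix at k - L; if the latter occurs in A|_N, at some
   q >= 0, the former occurs at q + L >= L.  As L is arbitrary, this gives
   occurrences arbitrarily far to the right.  The N-column submatrix of A^* at p
   is a conjugate-transposed block of the (N + 2w)-column submatrix of A at
   p - w.  For (d), the positions -N .. -1 are exactly those whose columns lie
   in neither N nor -N, so an infinite set of positions must leave them;
   conversely an occurrence in B|_N or B|_{-N} of a widened submatrix gives an
   occurrence of the original one at distance at least L from 0. *)

Lemma finite_int_set_bounded (S : set int) :
  finite_set S -> exists b : nat, forall x, S x -> (`|x| <= b)%N.
Proof.
move=> /finite_fsetP[X ->]; exists (\max_(x <- finmap.enum_fset X) `|x|)%N => x Xx.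
exact: (@leq_bigmax_seq _ _ xpredT (fun x : int => `|x|%N) x).
Qed.

Lemma unbounded_int_infinite (S : set int) :
  (forall L : nat, exists2 x, S x & (L <= `|x|)%N) -> infinite_set S.
Proof.
move=> unbS /finite_int_set_bounded[b Sb]; have [x Sx bx] := unbS b.+1.
by have := Sb _ Sx; lia.
Qed.

Lemma infinite_int_outside (a b : int) {S : set int} :
  infinite_set S -> exists2 x, S x & (x < a \/ b < x)%R.
Proof.
move=> infS; apply: contrapT => inS; apply: infS.
apply: (@sub_finite_set _ _ ((fun k : nat => a + k%:Z) @` `I_(absz (b - a + 1)%R))).
  move=> x Sx; have [ax xb] : (a <= x /\ x <= b)%R.
    by split; rewrite leNgt; apply/negP => ?; apply: inS; exists x => //; lia.
  by exists (absz (x - a)); rewrite /= /mkset; lia.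
exact: finite_image.
Qed.

Section Submatrices.
Variables (R : realType) (w : nat) (B : zmat R).

Lemma subm_window (N N' d : nat) (k q : int) : (d + N <= N')%N ->
  subm w B N' k = subm w B N' q -> subm w B N (k + d%:Z) = subm w B N (q + d%:Z).
Proof.
move=> dNN' kq; apply/matrixP => r c; rewrite !mxE.
have r' : (r + d < N' + w + w)%N by have := ltn_ord r; lia.
have c' : (c + d < N')%N by have := ltn_ord c; lia.
have := congr1 (fun M => fun_of_matrix M (Ordinal r') (Ordinal c')) kq; rewrite !mxE /=.
by move=> E; apply: etrans (etrans _ E) _; congr B; lia.
Qed.

Lemma subm_adjoint (N : nat) (p q : int) :
  subm w B (N + w + w) (p - w%:Z) = subm w B (N + w + w) q ->
  subm w (adjoint B) N p = subm w (adjoint B) N (q + w%:Z).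
Proof.
move=> pq; apply/matrixP => r c; rewrite !mxE /adjoint; congr conjc.
have r' : (c + w + w < N + w + w + w + w)%N by have := ltn_ord c; lia.
have c' : (r < N + w + w)%N by have := ltn_ord r; lia.
have := congr1 (fun M => fun_of_matrix M (Ordinal r') (Ordinal c')) pq; rewrite !mxE /=.
by move=> E; apply: etrans (etrans _ E) _; congr B; lia.
Qed.

Lemma inC_Zall_subm (N : nat) (k : int) :
  (0 < N)%N -> inC w B Zall N (subm w B N k).
Proof. by move=> N_gt0; split => //; exists k. Qed.

Lemma inC_subset (J1 J2 : set int) (N : nat) (M : 'M[R[i]]_(N + w + w, N)) :
  J1 `<=` J2 -> inC w B J1 N M -> inC w B J2 N M.
Proof. by move=> J12 [N_gt0 [k [Jk ->]]]; split => //; exists k; split => // j /Jk/J12. Qed.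

Lemma inC_widened (J : set int) (N L : nat) (k : int) :
  inC w B J (N + L + L) (subm w B (N + L + L) (k - L%:Z)) ->
  exists q, [/\ J (q + 1), J (q + (N + L + L)%:Z) &
                subm w B N k = subm w B N (q + L%:Z)].
Proof.
move=> [NL_gt0 [q [Jq kq]]]; exists q; split.
- exact: Jq.
- by apply: Jq; lia.
- by rewrite -(subrK L%:Z k); apply: (@subm_window _ _ L _ _ _ kq); lia.
Qed.

Lemma Ceq_natpos_recurrent (N L : nat) (k : int) :
  Ceq w B Zall natpos -> (0 < N)%N ->
  exists2 q, (L%:Z <= q)%R & subm w B N k = subm w B N q.
Proof.
move=> CeqB N_gt0.
have : inC w B Zall (N + L + L) (subm w B (N + L + L) (k - L%:Z)).
  by apply: inC_Zall_subm; lia.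
move=> /CeqB/inC_widened[q [q1 _ kq]].
by exists (q + L%:Z) => //; move: q1; rewrite /natpos /=; lia.
Qed.

Lemma Ceq_natpos_self_contained : Ceq w B Zall natpos -> self_contained w B.
Proof.
move=> CeqB N M [N_gt0 [k [_ ->]]]; apply: unbounded_int_infinite => L.
have [q Lq kq] := Ceq_natpos_recurrent _ L k CeqB N_gt0.
by exists q => //; lia.
Qed.

Lemma Ceq_natpos_from (k : int) : Ceq w B Zall natpos -> Ceq w B Zall (from k).
Proof.
move=> CeqB N M; split; last exact: inC_subset.
move=> [N_gt0 [k0 [_ ->]]]; split => //.
have [q k_le_q k0q] := Ceq_natpos_recurrent _ (absz k) k0 CeqB N_gt0.
by exists q; split => // j j1N; rewrite /from /=; lia.
Qed.

Lemma self_contained_Ceq_union : self_contained w B <-> Ceq_union w B.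
Proof.
split=> [scB N M | unionB N M [N_gt0 [k [_ ->]]]].
  split=> [BM | ]; last by case; apply: inC_subset.
  have [N_gt0 _] := BM.
  have [x Mx [x_lt | x_gt]] := infinite_int_outside (- N%:Z) (-1) (scB N M BM).
  - by right; split => //; exists x; split => // j j1N; rewrite /natneg /=; lia.
  - by left; split => //; exists x; split => // j j1N; rewrite /natpos /=; lia.
apply: unbounded_int_infinite => L.
have : inC w B Zall (N + L + L) (subm w B (N + L + L) (k - L%:Z)).
  by apply: inC_Zall_subm; lia.
move=> /unionB[] /inC_widened[q [q1 qN kq]]; exists (q + L%:Z) => //.
- by move: q1; rewrite /natpos /=; lia.
- by move: qN; rewrite /natneg /=; lia.
Qed.

End Submatrices.

Lemma Ceq_natpos_adjoint (R : realType) (w : nat) (B : zmat R) :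
  Ceq w B Zall natpos -> Ceq w (adjoint B) Zall natpos.
Proof.
move=> CeqB N M; split; last exact: inC_subset.
move=> [N_gt0 [p [_ ->]]].
have : inC w B Zall (N + w + w) (subm w B (N + w + w) (p - w%:Z)).
  by apply: inC_Zall_subm; lia.
move=> /CeqB[_ [q [Bq pq]]]; split => //; exists (q + w%:Z); split.
- by move=> j j1N; have := Bq 1%N; rewrite /natpos /=; lia.
- exact: subm_adjoint.
Qed.

Theorem lemma4p4 (R : realType) (w : nat) (A : zmat R) :
  band_operator w A ->
  Ceq w A Zall natpos ->
  [/\ self_contained w A,
      Ceq w (adjoint A) Zall natpos,
      (forall k : int, Ceq w A Zall (from k)) &
      (forall (v : nat) (B : zmat R), band_operator v B ->
         (self_contained v B <-> Ceq_union v B))].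
Proof.
move=> _ CeqA; split.
- exact: Ceq_natpos_self_contained.
- exact: Ceq_natpos_adjoint.
- by move=> k; apply: Ceq_natpos_from.
- by move=> v B _; apply: self_contained_Ceq_union.
Qed.
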